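(* $L_{\text{mpal}}$ can be verified with bounded error $\epsilon$ by an ADfA with $|\Sigma|+2$ affine states. Moreover, the protocol achieves perfect completeness.
   Context: $L_{\text{mpal}}=\{x \sigma x^R\mid x\in \Sigma^*, \sigma\in \Sigma\}$, and $\epsilon<1/2$ is rational. An affine state of an $m$-state affine register is a vector $v\in\mathbb{R}^m$ whose entries sum to $1$; affine operators are real matrices whose columns each sum to $1$; weighting observes basis state $e_j$ with probability $|v_j|/\|v\|_1$. A (one-way) ADfA is a deterministic finite automaton reading the input $¢ w\$$ (with left end-marker ¢ and right end-marker \$) left to right in real time, equipped with finitely many affine registers updated by affine operators with rational entries (unless stated otherwise) depending on the deterministic state and scanned symbol; after reading \$, if the deterministic state is accepting, each register is weighted once and the input is accepted iff every observed outcome lies in that register's accepting set. The ADfA acts as verifier in an Arthur–Merlin interactive proof system: it exchanges symbols with an all-powerful prover through a communication cell and reveals all its deterministic states, head moves and weighting outcomes to the prover (public coins). $V$ verifies $L$ with error $\epsilon$ if there is a prover such that every $w\in L$ is accepted with probability at least $1-\epsilon$, and for every $w\notin L$ and every prover, $w$ is rejected with probability at least $1-\epsilon$. Perfect completeness means every $w\in L$ is accepted with probability $1$. *)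

From HB Require Import structures.
From mathcomp Require Import all_boot all_order all_algebra.
Set Implicit Arguments. Unset Strict Implicit. Unset Printing Implicit Defensive.
Import Order.TTheory GRing.Theory Num.Theory.
Local Open Scope ring_scope.

Inductive tsym (S : Type) := LEnd | Sym of S | REnd.
Arguments LEnd {S}. Arguments REnd {S}.

Definition tape (S : Type) (w : seq S) : seq (tsym S) :=
  LEnd :: map (@Sym S) w ++ [:: REnd].

Definition mpal (S : Type) (w : seq S) : Prop :=
  exists (x : seq S) (s : S), w = x ++ s :: rev x.

(* At each step in state q scanning a, it writes [vout q a] to the
   communication cell, the prover answers r, then the deterministic state
   becomes [vdelta q a r] and register i is updated by [vop q a r i]. *)
Record verifier (S : Type) := Verifier {
  vQ : finType;
  vG : finType;
  vk : nat;
  vdim : 'I_vk -> nat;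
  vq0 : vQ;
  vacc : {set vQ};
  vout : vQ -> tsym S -> vG;
  vdelta : vQ -> tsym S -> vG -> vQ;
  vop : vQ -> tsym S -> vG -> forall i : 'I_vk, 'M[rat]_(vdim i);
  vinit : forall i : 'I_vk, 'cV[rat]_(vdim i);
  vaccset : forall i : 'I_vk, {set 'I_(vdim i)};
  vinit_affine : forall i, \sum_j vinit i j ord0 = 1;
  vop_affine : forall q a g i (j : 'I_(vdim i)), \sum_l vop q a g i l j = 1
}.

(* A (deterministic, w.l.o.g.) prover: given the input and the full public
   transcript so far (states, verifier messages, previous answers) and the
   current state and message, it answers a communication symbol. *)
Definition prover (S : Type) (V : verifier S) :=
  seq S -> seq (vQ V * vG V * vG V) -> vQ V -> vG V -> vG V.

Definition regs (S : Type) (V : verifier S) :=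
  forall i : 'I_(vk V), 'cV[rat]_(@vdim S V i).

Definition config (S : Type) (V : verifier S) :=
  (vQ V * regs V * seq (vQ V * vG V * vG V))%type.

Definition step (S : Type) (V : verifier S) (P : prover V) (w : seq S)
    (c : config V) (a : tsym S) : config V :=
  let: (q, rg, h) := c in
  let m := @vout S V q a in
  let r := P w h q m in
  (@vdelta S V q a r, (fun i => @vop S V q a r i *m rg i), rcons h (q, m, r)).

Definition run (S : Type) (V : verifier S) (P : prover V) (w : seq S) : config V :=
  foldl (step P w) (@vq0 S V, @vinit S V, [::]) (tape w).

(* Weighting a register state v: probability that the observed basis state
   lies in A, i.e. sum_{j in A} |v_j| / ||v||_1. *)
Definition weight_in (n : nat) (v : 'cV[rat]_n) (A : {set 'I_n}) : rat :=
  (\sum_(j in A) `|v j ord0|) / (\sum_j `|v j ord0|).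

Definition acc_prob (S : Type) (V : verifier S) (P : prover V) (w : seq S) : rat :=
  let: (q, rg, _) := run P w in
  if q \in vacc V then \prod_(i < vk V) weight_in (rg i) (@vaccset S V i) else 0.

Definition verifies_with_error (S : Type) (V : verifier S) (L : seq S -> Prop)
    (eps : rat) : Prop :=
  (exists P : prover V, forall w, L w -> acc_prob P w >= 1 - eps) /\
  (forall w, ~ L w -> forall P : prover V, 1 - acc_prob P w >= 1 - eps).

Definition perfect_completeness (S : Type) (V : verifier S)
    (L : seq S -> Prop) : Prop :=
  exists P : prover V, forall w, L w -> acc_prob P w = 1.

Definition affine_states (S : Type) (V : verifier S) : nat :=
  (\sum_(i < vk V) @vdim S V i)%N.

(* The verifier reads x s y, the prover announcing where the middle symbol s
   is, and keeps in one affine register the numbers N = code(rev x) - code(y)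
   and B^|y|, where code is the base-B numeral (B = |S| + 1) whose digits are
   the nonzero symbol ranks.  Each symbol updates these two coordinates by an
   affine map whose constant term is paid for by the unit mass of the affine
   state; a third coordinate absorbs the remaining mass.  At the right
   end-marker the register becomes (N/eps, -N/eps, 1), so the weighting hits
   the accepting coordinate with probability 1/(1 + 2|N|/eps).  This is 1 if
   y = rev x, and at most eps otherwise because code is injective, so that
   |N| >= 1.  Over the empty alphabet the language is empty and a verifier
   that always rejects does the job. *)

From HB Require Import structures.
From mathcomp Require Import all_boot all_order all_algebra ring lra.
Import Order.TTheory GRing.Theory Num.Theory.
Local Open Scope ring_scope.
Set Implicit Arguments. Unset Strict Implicit. Unset Printing Implicit Defensive.

Lemma sum_indicator (R : pzSemiRingType) m (j : 'I_m) : \sum_i ((i == j)%:R : R) = 1.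
Proof. by rewrite (bigD1 j) //= eqxx big1 ?addr0 // => i /negbTE ->. Qed.

Lemma delta_col_sum {R : pzSemiRingType} {m} (i : 'I_m) :
  \sum_j (delta_mx i 0 : 'cV[R]_m) j 0 = 1.
Proof. by under eq_bigr => j _ do rewrite mxE eqxx andbT; apply: sum_indicator. Qed.

Lemma mx1_col_sum {R : pzSemiRingType} {m} (j : 'I_m) : \sum_i (1%:M : 'M[R]_m) i j = 1.
Proof. by under eq_bigr => i _ do rewrite mxE; apply: sum_indicator. Qed.

Lemma sum_mulmx_col_stochastic (R : pzSemiRingType) m n (M : 'M[R]_(m, n))
    (v : 'cV[R]_n) :
  (forall j, \sum_i M i j = 1) -> \sum_i (M *m v) i 0 = \sum_j v j 0.
Proof.
move=> M1; under eq_bigr do rewrite mxE; rewrite exchange_big /=.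
by apply: eq_bigr => j _; rewrite -mulr_suml M1 mul1r.
Qed.

Section TwoCoordinateAffineMaps.

Variables (R : comPzRingType) (n : nat).

Definition i_num : 'I_n.+3 := ord0.
Definition i_pow : 'I_n.+3 := Ordinal (isT : (1 < n.+3)%N).
Definition i_acc : 'I_n.+3 := Ordinal (isT : (2 < n.+3)%N).

Definition affine_row (a b c : R) (j : 'I_n.+3) : R :=
  (if j == i_num then a else 0) + (if j == i_pow then b else 0) + c.

Definition affine2 (a b c d e f : R) : 'M[R]_n.+3 := \matrix_(i, j)
  if i == i_num then affine_row a b c j
  else if i == i_pow then affine_row d e f j
  else if i == i_acc then 1 - affine_row a b c j - affine_row d e f j
  else 0.

Lemma affine2_col_sum a b c d e f j : \sum_i affine2 a b c d e f i j = 1.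
Proof.
rewrite (bigD1 i_num) // (bigD1 i_pow) // (bigD1 i_acc) // big1 => [|i].
  by rewrite !mxE /=; ring.
by rewrite mxE => /andP[/andP[/andP[_ /negbTE->] /negbTE->] /negbTE->].
Qed.

Lemma sum_affine_row a b c (v : 'cV[R]_n.+3) :
  \sum_j affine_row a b c j * v j 0
  = a * v i_num 0 + b * v i_pow 0 + c * \sum_j v j 0.
Proof.
under eq_bigr do rewrite /affine_row !mulrDl !(fun_if (fun x => x * _)) !mul0r.
by rewrite !big_split /= -!big_mkcond !big_pred1_eq mulr_sumr.
Qed.

Lemma affine2_mulmx a b c d e f (v : 'cV[R]_n.+3) : \sum_j v j 0 = 1 ->
  affine2 a b c d e f *m v = \col_i
    (if i == i_num then a * v i_num 0 + b * v i_pow 0 + c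
     else if i == i_pow then d * v i_num 0 + e * v i_pow 0 + f
     else if i == i_acc then 1 - (a * v i_num 0 + b * v i_pow 0 + c)
                             - (d * v i_num 0 + e * v i_pow 0 + f)
     else 0).
Proof.
move=> v1; apply/matrixP => i j; rewrite !mxE (ord1 j).
under eq_bigr do rewrite mxE.
case: ifP => _; first by rewrite sum_affine_row v1 mulr1.
case: ifP => _; first by rewrite sum_affine_row v1 mulr1.
case: ifP => _; last by rewrite big1 // => l _; rewrite mul0r.
under eq_bigr do rewrite !mulrBl mul1r.
by rewrite !sumrB !sum_affine_row v1 !mulr1.
Qed.

Lemma affine2_num a b c d e f (v : 'cV[R]_n.+3) : \sum_j v j 0 = 1 ->
  (affine2 a b c d e f *m v) i_num 0 = a * v i_num 0 + b * v i_pow 0 + c.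
Proof. by move=> v1; rewrite affine2_mulmx // mxE. Qed.

Lemma affine2_pow a b c d e f (v : 'cV[R]_n.+3) : \sum_j v j 0 = 1 ->
  (affine2 a b c d e f *m v) i_pow 0 = d * v i_num 0 + e * v i_pow 0 + f.
Proof. by move=> v1; rewrite affine2_mulmx // mxE. Qed.

Lemma affine2_sum a b c d e f (v : 'cV[R]_n.+3) : \sum_j v j 0 = 1 ->
  \sum_i (affine2 a b c d e f *m v) i 0 = 1.
Proof. by move=> v1; rewrite sum_mulmx_col_stochastic // => j; apply: affine2_col_sum. Qed.

End TwoCoordinateAffineMaps.

Arguments i_num {n}. Arguments i_pow {n}. Arguments i_acc {n}.
Arguments affine2 {R n}.

Lemma weight_affine2_acc n (t : rat) (v : 'cV[rat]_n.+3) : \sum_j v j 0 = 1 ->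
  weight_in (affine2 t 0 0 (- t) 0 0 *m v) [set i_acc] = 1 / (2 * `|t * v i_num 0| + 1).
Proof.
move=> v1; rewrite /weight_in affine2_mulmx // big_set1 !mxE /=.
rewrite (bigD1 i_num) // (bigD1 i_pow) // (bigD1 i_acc) // big1 => [|i].
  rewrite !mxE /= !mul0r !addr0 mulNr normrN opprK.
  by rewrite (_ : 1 - _ + _ = 1) ?normr1 //; [congr (_ / _); ring | ring].
by rewrite mxE => /andP[/andP[/andP[_ /negbTE->] /negbTE->] /negbTE->]; rewrite normr0.
Qed.

Section Numerals.

Variable S : finType.

Definition digit (a : S) : nat := (enum_rank a).+1.
Definition base : nat := #|S|.+1.

Fixpoint code (s : seq S) : nat :=
  if s is a :: t then (digit a + base * code t)%N else 0%N.

Lemma digit_lt_base a : (digit a < base)%N.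
Proof. by rewrite ltnS ltn_ord. Qed.

Lemma code_rcons s a : code (rcons s a) = (code s + digit a * base ^ size s)%N.
Proof.
elim: s => [|b s IHs] /=; first by rewrite muln0 addn0 add0n muln1.
by rewrite IHs mulnDr expnS mulnCA addnA.
Qed.

Lemma code_inj : injective code.
Proof.
elim=> [|a s IHs] [|b t] //= eq_code.
have eq_ab : digit a = digit b.
  have := congr1 (modn^~ base) eq_code.
  rewrite ![(digit _ + _)%N]addnC ![(base * _)%N]mulnC !modnMDl.
  by rewrite !modn_small ?digit_lt_base.
move: eq_code; rewrite eq_ab => /addnI /eqP; rewrite eqn_mul2l /= => /eqP /IHs ->.
by move: eq_ab => -[] /ord_inj /enum_rank_inj ->.
Qed.

End Numerals.

Lemma norm_natrB_ge1 (R : numDomainType) (m n : nat) :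
  m != n -> 1 <= `|m%:R - n%:R : R|.
Proof.
case: (ltngtP m n) => // lt _; first rewrite distrC.
all: by rewrite -natrB ?(ltnW lt) // normr_nat ler1n subn_gt0.
Qed.

Inductive phase := FirstHalf | SecondHalf | Accepted | Rejected.

Definition phase_code (p : phase) : bool * bool :=
  match p with
  | FirstHalf => (false, false) | SecondHalf => (true, false)
  | Accepted => (true, true) | Rejected => (false, true)
  end.

Definition phase_decode (b : bool * bool) : phase :=
  match b with
  | (false, false) => FirstHalf | (true, false) => SecondHalf
  | (true, true) => Accepted | (false, true) => Rejected
  end.

Lemma phase_codeK : cancel phase_code phase_decode. Proof. by case. Qed.

HB.instance Definition _ := Finite.copy phase (can_type phase_codeK).

Section MiddlePalindromeVerifier.

Variables (S : finType) (k : nat) (t : rat).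

Definition mpal_delta (q : phase) (a : tsym S) (middle : bool) : phase :=
  match q, a with
  | FirstHalf, LEnd => FirstHalf
  | FirstHalf, Sym _ => if middle then SecondHalf else FirstHalf
  | SecondHalf, Sym _ => SecondHalf
  | SecondHalf, REnd => Accepted
  | _, _ => Rejected
  end.

Definition mpal_op (q : phase) (a : tsym S) (middle : bool) : 'M[rat]_k.+3 :=
  match q, a with
  | FirstHalf, Sym s =>
      if middle then affine2 1 0 0 0 1 0 else affine2 (base S)%:R 0 (digit s)%:R 0 1 0
  | SecondHalf, Sym s => affine2 1 (- (digit s)%:R) 0 0 (base S)%:R 0
  | SecondHalf, REnd => affine2 t 0 0 (- t) 0 0
  | _, _ => affine2 1 0 0 0 1 0
  end.

Lemma mpal_op_col_sum q a middle j : \sum_i mpal_op q a middle i j = 1.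
Proof. by case: q; case: a => [|s|] //=; try case: middle; apply: affine2_col_sum. Qed.

Definition mpal_verifier : verifier S :=
  @Verifier S phase bool 1 (fun _ => k.+3) FirstHalf [set Accepted]
    (fun _ _ => true) mpal_delta (fun q a middle _ => mpal_op q a middle)
    (fun _ => delta_mx i_pow 0) (fun _ => [set i_acc])
    (fun _ => delta_col_sum i_pow) (fun q a middle _ => mpal_op_col_sum q a middle).

Definition mpal_start : config mpal_verifier :=
  (FirstHalf, fun _ => delta_mx i_pow 0, [::]).

Section Run.

Variables (P : prover mpal_verifier) (w : seq S).

Definition prover_answered (n : nat) (b : bool) : Prop :=
  exists h q m, size h = n /\ P w h q m = b.

Definition reads_prefix (u : seq S) (c : config mpal_verifier) : Prop :=
  let: (q, rg, h) := c in let v := rg ord0 in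
  [/\ size h = (size u).+1, \sum_j v j 0 = 1 &
    [/\ q = FirstHalf, v i_num 0 = (code (rev u))%:R, v i_pow 0 = 1
      & forall i, (i < size u)%N -> prover_answered i.+1 false]
    \/ q = SecondHalf /\ exists x s y, [/\ u = x ++ s :: y,
      v i_num 0 = (code (rev x))%:R - (code y)%:R,
      v i_pow 0 = (base S ^ size y)%:R & prover_answered (size x).+1 true]].

Lemma reads_prefix_nil : reads_prefix [::] (step P w mpal_start LEnd).
Proof.
have init_sum := delta_col_sum (R := rat) (@i_pow k).
rewrite /reads_prefix /=; split=> //; first exact: affine2_sum.
left; split=> //; rewrite ?affine2_num ?affine2_pow // !mxE /=; ring.
Qed.

Lemma reads_prefix_rcons u a c :
  reads_prefix u c -> reads_prefix (rcons u a) (step P w c (Sym a)).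
Proof.
case: c => [[q rg] h] [size_h sum1
  [[-> num pow before] | [-> [x [s [y [eq_u num pow mid]]]]]]].
- rewrite /reads_prefix /= !size_rcons size_h.
  case middle: (P w h FirstHalf true); split=> //; try exact: affine2_sum.
    right; split=> //; exists u, a, [::]; split; first by rewrite cats1.
    + by rewrite affine2_num // num pow /=; ring.
    + by rewrite affine2_pow // num pow /=; ring.
    + by exists h, FirstHalf, true; rewrite size_h.
  left; split=> //.
  + by rewrite affine2_num // num pow rev_rcons /= natrD natrM; ring.
  + by rewrite affine2_pow // num pow; ring.
  + move=> i; rewrite ltnS leq_eqVlt => /orP[/eqP-> | /before //].
    by exists h, FirstHalf, true; rewrite size_h.
- rewrite /reads_prefix /= !size_rcons size_h; split=> //; first exact: affine2_sum.
  right; split=> //; exists x, s, (rcons y a); split=> //.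
  + by rewrite eq_u rcons_cat.
  + by rewrite affine2_num // num pow code_rcons natrD natrM; ring.
  + by rewrite affine2_pow // pow size_rcons expnS natrM; ring.
Qed.

Lemma reads_prefix_run u :
  reads_prefix u (foldl (step P w) mpal_start (LEnd :: map (@Sym S) u)).
Proof.
elim/last_ind: u => [|u a IHu]; first exact: reads_prefix_nil.
by rewrite map_rcons -rcons_cons foldl_rcons; apply: reads_prefix_rcons.
Qed.

Lemma acc_prob_mpal_verifier :
  (acc_prob P w = 0 /\ forall i, (i < size w)%N -> prover_answered i.+1 false) \/
  exists x s y, [/\ w = x ++ s :: y, prover_answered (size x).+1 true &
    acc_prob P w = 1 / (2 * `|t * ((code (rev x))%:R - (code y)%:R)| + 1)].
Proof.
rewrite /acc_prob /run /tape cats1 -rcons_cons foldl_rcons.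
have := reads_prefix_run w.
case: (foldl _ _ _) => [[q rg] h] [_ sum1
  [[-> _ _ before] | [-> [x [s [y [eq_w num _ mid]]]]]]].
  by left; rewrite /= inE.
right; exists x, s, y; split=> //.
by rewrite /= inE big_ord1 weight_affine2_acc // num.
Qed.

End Run.

Lemma mpal_verifier_sound (P : prover mpal_verifier) w :
  ~ mpal w -> acc_prob P w <= 1 / (2 * `|t| + 1).
Proof.
move=> not_mpal.
have [[-> _] | [x [s [y [eq_w _ ->]]]]] := acc_prob_mpal_verifier P w.
  by rewrite divr_ge0 // ltW // ltr_pwDr // mulr_ge0.
have ne_code : code (rev x) != code y.
  by apply/eqP => /code_inj rev_x; apply: not_mpal; exists x, s; rewrite eq_w rev_x.
have d_ge1 := norm_natrB_ge1 rat ne_code.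
rewrite !div1r lef_pV2 ?posrE ?ltr_pwDr ?mulr_ge0 ?normr_ge0 // lerD2r normrM.
by rewrite ler_pM2l // ler_peMr.
Qed.

Definition honest_prover : prover mpal_verifier :=
  fun w h _ _ => size h == (size w)./2.+1.

Lemma mpal_verifier_complete w : mpal w -> acc_prob honest_prover w = 1.
Proof.
case=> x0 [s0 eq_w].
have half_w : (size w)./2 = size x0.
  by rewrite eq_w size_cat /= size_rev addnS addnn (half_bit_double _ true).
have honest_answer n b : prover_answered honest_prover w n b -> (n == size x0 + 1)%N = b.
  by case=> h [q [m [<- <-]]]; rewrite /honest_prover half_w addn1.
have [[_ before] | [x [s [y [eq_w' mid ->]]]]] := acc_prob_mpal_verifier honest_prover w.
  have /before/honest_answer : (size x0 < size w)%N.
    by rewrite eq_w size_cat /= addnS ltnS leq_addr.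
  by rewrite addn1 eqxx.
move/honest_answer: mid; rewrite addn1 eqSS => /eqP size_x.
move: eq_w; rewrite eq_w' => /eqP; rewrite eqseq_cat // => /andP[/eqP-> /eqP[_ ->]].
by rewrite subrr mulr0 normr0 mulr0 add0r divr1.
Qed.

Lemma mpal_verifier_states : affine_states mpal_verifier = k.+3.
Proof. by rewrite /affine_states big_ord1. Qed.

End MiddlePalindromeVerifier.

Arguments honest_prover {S k t}.

Lemma mpal_verifier_error (S : finType) k (eps : rat) : 0 < eps ->
  verifies_with_error (mpal_verifier S k eps^-1) (@mpal S) eps.
Proof.
move=> eps_gt0; split.
  by exists honest_prover => w /mpal_verifier_complete ->; rewrite lerBlDr lerDl ltW.
move=> w not_mpal P; rewrite lerD2l lerN2.
apply: le_trans (mpal_verifier_sound P not_mpal) _.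
have denom_gt0 : 0 < 2 * eps^-1 + 1 by rewrite ltr_wpDl ?mulr_ge0 ?invr_ge0 ?ltW.
rewrite gtr0_norm ?invr_gt0 // ler_pdivrMr // mulrDr mulrCA mulfV ?gt_eqF //; lra.
Qed.

Section RejectingVerifier.

Variables (S : Type) (n : nat).

Definition rejecting_verifier : verifier S :=
  @Verifier S unit unit 1 (fun _ => n.+1) tt set0 (fun _ _ => tt) (fun _ _ _ => tt)
    (fun _ _ _ _ => 1%:M) (fun _ => delta_mx 0 0) (fun _ => set0)
    (fun _ => delta_col_sum 0) (fun _ _ _ _ => mx1_col_sum).

Lemma rejecting_verifier_states : affine_states rejecting_verifier = n.+1.
Proof. by rewrite /affine_states big_ord1. Qed.

Lemma rejecting_acc_prob (P : prover rejecting_verifier) w : acc_prob P w = 0.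
Proof. by rewrite /acc_prob; case: (run P w) => [[q rg] h]; rewrite in_set0. Qed.

Lemma rejecting_verifier_empty_language (L : seq S -> Prop) (eps : rat) :
  (forall w, ~ L w) -> 0 <= eps ->
  verifies_with_error rejecting_verifier L eps /\ perfect_completeness rejecting_verifier L.
Proof.
move=> L0 eps_ge0; have P : prover rejecting_verifier := fun _ _ _ m => m.
split; last by exists P => w /L0.
split; first by exists P => w /L0.
by move=> w _ P'; rewrite rejecting_acc_prob subr0 lerBlDr lerDl.
Qed.

End RejectingVerifier.

Theorem theorem3 (S : finType) (eps : rat) (heps : 0 < eps < 1 / 2) :
  exists V : verifier S,
    affine_states V = (#|S| + 2)%N /\
    verifies_with_error V (@mpal S) eps /\
    perfect_completeness V (@mpal S).
Proof.
case/andP: heps => eps_gt0 _.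
case card_S: #|S| => [|k].
  have no_mpal (w : seq S) : ~ mpal w by case=> _ [s _]; move: (card0_eq card_S s).
  exists (rejecting_verifier S 1); split; first exact: rejecting_verifier_states.
  exact: rejecting_verifier_empty_language no_mpal (ltW eps_gt0).
exists (mpal_verifier S k eps^-1); split; first by rewrite mpal_verifier_states addn2.
split; first exact: mpal_verifier_error.
by exists honest_prover; apply: mpal_verifier_complete.
Qed.
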